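(* Let $n\ge 2$ and let $(G(k))_{k\in\mathbb{N}}$ be a sequence of digraphs on $\mathcal{V}=\{1,\dots,n\}$ with knowledge sets evolving by the flooding update described in the context. Define $$\nu(k)=\begin{cases} k+2 & \text{if } k\le\lceil n/2\rceil-1,\\ n & \text{if } k\ge\lceil n/2\rceil.\end{cases}$$ If for every $k\in\{0,1,\dots,n-2\}$ the digraph $G(k)$ contains $\nu(k)(k)$ (i.e. every node has, at time $k$, a closed input-cord of cardinality greater than $\nu(k)-2$), then $|\{i\in\mathcal{V}: d_w\in\mathcal{K}_i(k+1)\}|\ge k+2$ for all $w\in\mathcal{V}$ and all $k\in\{0,1,\dots,n-2\}$.
   Context: Network: $\mathcal{V}=\{1,\dots,n\}$; node $i$ holds initial data $d_i\in\mathbb{R}$, pairwise distinct. At discrete times $k\in\mathbb{N}$ communication follows digraph $G(k)=(\mathcal{V},\mathcal{E}(k))$; node $i$ sends to $j$ at time $k$ iff $(i,j)\in\mathcal{E}(k)$. Knowledge sets: $\mathcal{K}_i(0)=\{d_i\}$ and $\mathcal{K}_j(k+1)=\mathcal{K}_j(k)\cup\bigcup_{i:(i,j)\in\mathcal{E}(k)}\mathcal{K}_i(k)$. An input-cord to node $i$ at time $k$ is an ordered list $(\mathcal{I}^i_1,\dots,\mathcal{I}^i_m)$ of pairwise distinct nodes of $\mathcal{V}\setminus\{i\}$ with $(\mathcal{I}^i_j,\mathcal{I}^i_{j+1})\in\mathcal{E}(k)$ for $j=1,\dots,m-1$ and $(\mathcal{I}^i_m,i)\in\mathcal{E}(k)$;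 its cardinality is $m$. It is closed if moreover $(i,\mathcal{I}^i_1)\in\mathcal{E}(k)$. For an integer $\chi$, node $i$ is contained in a $\chi(k)$-cycle if it has at time $k$ a closed input-cord of cardinality greater than $\chi-2$; $G(k)$ contains $\chi(k)$ if every node is contained in a $\chi(k)$-cycle. *)

From mathcomp Require Import all_boot all_order.
From mathcomp Require Import reals.
Set Implicit Arguments. Unset Strict Implicit. Unset Printing Implicit Defensive.

(* Nodes are 'I_n (i.e. {0,...,n-1} standing for {1,...,n}).
   A time-varying digraph is E : nat -> rel 'I_n, with E k i j meaning (i,j) in E(k). *)

Fixpoint know (T : eqType) (n : nat) (E : nat -> rel 'I_n) (d : 'I_n -> T)
  (k : nat) (j : 'I_n) : pred T :=
  match k with
  | 0 => fun x => x == d j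
  | k'.+1 => fun x => know E d k' j x || [exists i, E k' i j && know E d k' i x]
  end.

(* Cardinality = size. *)
Definition closed_input_cord (n : nat) (E : nat -> rel 'I_n) (k : nat)
  (i : 'I_n) (c : seq 'I_n) : bool :=
  if c is x :: s then
    [&& uniq c, i \notin c, path (E k) x s, E k (last x s) i & E k i x]
  else false.

Definition in_chi_cycle (n : nat) (E : nat -> rel 'I_n) (k chi : nat) (i : 'I_n) : Prop :=
  exists c, closed_input_cord E k i c /\ (chi - 2 < size c)%N.

Definition contains_chi (n : nat) (E : nat -> rel 'I_n) (k chi : nat) : Prop :=
  forall i : 'I_n, in_chi_cycle E k chi i.

Definition nu (n k : nat) : nat := if (k <= uphalf n - 1)%N then k.+2 else n.

From mathcomp Require Import all_boot all_order.
From mathcomp Require Import reals.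
From mathcomp Require Import zify.

Set Implicit Arguments.
Unset Strict Implicit.
Unset Printing Implicit Defensive.

(* The set of nodes informed of a value can only grow.  At time k node w lies
   on a closed input-cord of at least k+1 further distinct nodes, i.e. on a
   directed cycle with at least k+2 nodes.  If only k+1 nodes know d_w, this
   cycle leaves the informed set along some edge, whose head learns d_w at
   time k+1; so by induction at least k+1 nodes know d_w after k rounds. *)

Lemma path_exits_set (T : finType) (e : rel T) (S : {set T}) x p :
  path e x p -> x \in S -> ~~ all (mem S) p ->
  exists a b, [/\ a \in S, b \notin S & e a b].
Proof.
elim: p x => [|y p IH] x //= /andP[exy hp] xS.
case yS: (y \in S) => /=; first exact: IH yS.
by exists x, y; rewrite yS.
Qed.

Lemma closed_input_cord_exits (n : nat) (E : nat -> rel 'I_n) k i c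
    (S : {set 'I_n}) :
  closed_input_cord E k i c -> i \in S -> (#|S| <= size c)%N ->
  exists a b, [/\ a \in S, b \notin S & E k a b].
Proof.
case: c => [|x s] //= /and5P[uniq_c i_notin_c path_c _ E_ix] iS card_S.
have cycle_i : path (E k) i (x :: s) by rewrite /= E_ix path_c.
apply: path_exits_set cycle_i (iS) _.
apply: contraTN card_S => /allP c_sub_S; rewrite -ltnNge.
have <- : #|i :: x :: s| = (size s).+2 by apply/card_uniqP; rewrite /= i_notin_c.
apply: subset_leq_card; apply/subsetP=> y; rewrite in_cons => /predU1P[->|] //.
exact: c_sub_S.
Qed.

Section Informed.

Variables (T : eqType) (n : nat) (E : nat -> rel 'I_n) (d : 'I_n -> T).

Definition informed (x : T) (k : nat) : {set 'I_n} :=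
  [set i | know E d k i x].

Lemma know_succ k j x : know E d k j x -> know E d k.+1 j x.
Proof. by move=> h /=; rewrite h. Qed.

Lemma informed_succ x k : informed x k \subset informed x k.+1.
Proof. by apply/subsetP=> i; rewrite !inE; apply: know_succ. Qed.

Lemma informed_self w k : w \in informed (d w) k.
Proof.
rewrite inE; elim: k => [|k IH]; first by rewrite /=.
exact: know_succ.
Qed.

Lemma informed_edge x k a b :
  a \in informed x k -> E k a b -> b \in informed x k.+1.
Proof.
rewrite !inE => a_knows E_ab /=; apply/orP; right.
by apply/existsP; exists a; rewrite E_ab.
Qed.

Lemma informed_card_succ w k c :
  closed_input_cord E k w c -> (#|informed (d w) k| <= size c)%N ->
  (#|informed (d w) k| < #|informed (d w) k.+1|)%N.
Proof.
move=> cord card_le.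
have [a [b [aS bS E_ab]]] :=
  closed_input_cord_exits cord (informed_self w k) card_le.
apply: proper_card; apply/properP; split; first exact: informed_succ.
by exists b; [exact: informed_edge E_ab | ].
Qed.

End Informed.

Lemma nu_ge (n k : nat) : (2 <= n)%N -> (k <= n - 2)%N -> (k.+2 <= nu n k)%N.
Proof. by rewrite /nu; case: ifP => _; lia. Qed.

Theorem theorem2 (R : realType) (n : nat) (E : nat -> rel 'I_n) (d : 'I_n -> R) :
  (2 <= n)%N ->
  injective d ->
  (forall k : nat, (k <= n - 2)%N -> contains_chi E k (nu n k)) ->
  forall (w : 'I_n) (k : nat), (k <= n - 2)%N ->
    (k.+2 <= #|[set i : 'I_n | know E d k.+1 i (d w)]|)%N.
Proof.
move=> n_ge2 _ chi w.
suff grow k : (k <= n - 1)%N -> (k.+1 <= #|informed E d (d w) k|)%N.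
  by move=> k k_le; apply: grow; lia.
elim: k => [|k IH] k_le.
  by rewrite card_gt0; apply/set0Pn; exists w; apply: informed_self.
have k_le' : (k <= n - 2)%N by lia.
have [c [cord size_c]] := chi k k_le' w.
have [card_big|card_small] := leqP k.+2 #|informed E d (d w) k|.
  exact: leq_trans card_big (subset_leq_card (informed_succ _ _ _ _)).
apply: leq_trans (informed_card_succ cord _); first exact: IH (ltnW k_le).
have := nu_ge n_ge2 k_le'; lia.
Qed.
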